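(* For any set $\mathcal{A}$ of Left dead-ends, the set $\operatorname{up}(\mathcal{A})$ is simply closed.
   Context: Games are finite partizan games; $o(G)$ is the misère outcome class (ordered $\mathscr{L}>\mathscr{N}>\mathscr{R}$, $\mathscr{L}>\mathscr{P}>\mathscr{R}$). A universe is a set of games closed under options, disjunctive sums, conjugates, and forming $\{\mathscr{G}^L\mid\mathscr{G}^R\}$ from nonempty finite subsets of it; $G\geq_\mathcal{U}H$ means $o(G+X)\geq o(H+X)$ for all $X\in\mathcal{U}$. A set of games is simply closed if it is closed under taking options and under disjunctive sums. A Left dead-end is a game all of whose subpositions have no Left option; $\mathcal{L}$ is the set of Left dead-ends. For Left dead-ends, $G\geq H$ means $G\geq_\mathcal{U}H$ for every universe $\mathcal{U}$. $\operatorname{cl}(\mathcal{A})$ is the smallest simply closed set containing $\mathcal{A}$, and $\operatorname{up}(\mathcal{A})=\{G\in\mathcal{L}:G\geq H\text{ for some }H\in\operatorname{cl}(\mathcal{A})\}$. *)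

From Stdlib Require Import List.
Import ListNotations.

Inductive game : Type := Mk : list game -> list game -> game.

Definition leftOpts (G : game) : list game := let 'Mk L _ := G in L.
Definition rightOpts (G : game) : list game := let 'Mk _ R := G in R.

Definition is_option (H G : game) : Prop := In H (leftOpts G) \/ In H (rightOpts G).

Fixpoint gadd (G : game) : game -> game :=
  fix gaddG (H : game) : game :=
    match G, H with
    | Mk GL GR, Mk HL HR =>
        Mk (map (fun x => gadd x H) GL ++ map gaddG HL)
           (map (fun x => gadd x H) GR ++ map gaddG HR)
    end.

Fixpoint gneg (G : game) : game :=
  match G with Mk L R => Mk (map gneg R) (map gneg L) end.

(** Misère play: a player who cannot move on their turn wins.
    [lf G] : Left wins G moving first (Left has no move, or Left moves to some
    G^L on which Right, to move, has at least one move and every Right move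
    G^LR is again a first-player Left win).  [rf] is the symmetric notion. *)
Fixpoint lf (G : game) : bool :=
  match G with
  | Mk [] _ => true
  | Mk L _ => existsb (fun GL => match GL with
                 | Mk _ [] => false
                 | Mk _ R' => forallb lf R' end) L
  end.

Fixpoint rf (G : game) : bool :=
  match G with
  | Mk _ [] => true
  | Mk _ R => existsb (fun GR => match GR with
                 | Mk [] _ => false
                 | Mk L' _ => forallb rf L' end) R
  end.

Inductive outcome : Type := oL | oN | oP | oR.

(** o(G): L = Left wins whoever starts, N = first player wins,
    P = second player wins, R = Right wins whoever starts. *)
Definition o (G : game) : outcome :=
  match lf G, rf G with
  | true, false => oL
  | true, true => oN
  | false, false => oP
  | false, true => oR
  end.

(** Partial order on outcomes: L > N > R, L > P > R (N, P incomparable). *)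
Definition outcome_le (a b : outcome) : Prop :=
  match a, b with
  | oR, _ => True
  | _, oL => True
  | oN, oN => True
  | oP, oP => True
  | _, _ => False
  end.

Definition gset := game -> Prop.

Definition universe (U : gset) : Prop :=
  (forall G H, U G -> is_option H G -> U H) /\
  (forall G H, U G -> U H -> U (gadd G H)) /\
  (forall G, U G -> U (gneg G)) /\
  (forall L R, L <> [] -> R <> [] ->
     (forall x, In x L -> U x) -> (forall x, In x R -> U x) -> U (Mk L R)).

Definition ge_in (U : gset) (G H : game) : Prop :=
  forall X, U X -> outcome_le (o (gadd H X)) (o (gadd G X)).

Inductive left_dead_end : game -> Prop :=
| lde_intro : forall R, (forall x, In x R -> left_dead_end x) ->
                        left_dead_end (Mk [] R).

Definition dge (G H : game) : Prop :=
  forall U, universe U -> ge_in U G H.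

Definition simply_closed (S : gset) : Prop :=
  (forall G H, S G -> is_option H G -> S H) /\
  (forall G H, S G -> S H -> S (gadd G H)).

Definition cl (A : gset) : gset :=
  fun G => forall S, simply_closed S -> (forall x, A x -> S x) -> S G.

Definition up (A : gset) : gset :=
  fun G => left_dead_end G /\ exists H, cl A H /\ dge G H.

(* For Left dead-ends, G >= H already forces every Right option G' of G to
   dominate some Right option of H.  Otherwise pick, for each Right option h of
   H, a game Y_h such that Right moving first wins G' + Y_h but loses h + Y_h,
   and an integer n so large that Right moving first wins G' + n, and put
   T = {n, Y_h, ... | 0}.  Right moving first wins G + T by moving to G' + T,
   but loses H + T: Left answers h + T with h + Y_h, and H + 0 leaves Left
   without a move, which wins in misere play.  As cl(A) is closed under
   options, up(A) is closed under options; closure under sums holds because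
   >= is compatible with the disjunctive sum, which is commutative and
   associative up to outcome. *)

From Stdlib Require Import List Bool Permutation Classical.
Import ListNotations.

Fixpoint game_ind_In (P : game -> Prop)
  (f : forall L R, (forall x, In x L -> P x) -> (forall x, In x R -> P x) -> P (Mk L R))
  (G : game) : P G :=
  let fix all_in (l : list game) : forall x, In x l -> P x :=
    match l with
    | [] => fun x H => False_ind _ H
    | y :: l' => fun x H =>
        match H with
        | or_introl e => eq_ind y P (game_ind_In P f y) x e
        | or_intror H' => all_in l' x H'
        end
    end in
  match G with Mk L R => f L R (all_in L) (all_in R) end.

Lemma forallb_negb_existsb {A} (f : A -> bool) l :
  forallb f l = negb (existsb negb (map f l)).
Proof. induction l as [|x l IH]; simpl; [reflexivity|]. now rewrite IH; destruct (f x). Qed.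

Lemma existsb_map_ext_in {A B} (f : A -> bool) (g : B -> bool) (h : A -> B) l :
  (forall x, In x l -> f x = g (h x)) -> existsb f l = existsb g (map h l).
Proof.
  induction l as [|x l IH]; intros Hf; simpl; [reflexivity|].
  rewrite Hf, IH; auto with datatypes.
Qed.

Lemma existsb_Permutation {A} (f : A -> bool) l l' :
  Permutation l l' -> existsb f l = existsb f l'.
Proof.
  induction 1; simpl; try congruence.
  now rewrite !orb_assoc, (orb_comm (f y)).
Qed.

Lemma list_choice {A B} (P : B -> Prop) (R : A -> B -> Prop) (l : list A) :
  (forall x, In x l -> exists y, P y /\ R x y) ->
  exists ys, (forall y, In y ys -> P y) /\ (forall x, In x l -> exists y, In y ys /\ R x y).
Proof.
  induction l as [|x l IH]; intros Hl.
  - exists []. split; intros ? [].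
  - destruct (Hl x (or_introl eq_refl)) as [y [Py Rxy]].
    destruct IH as [ys [HP HR]]; [intros; apply Hl; now right|].
    exists (y :: ys). split.
    + intros y' [<- | Hy']; auto.
    + intros x' [<- | Hx'].
      * exists y. split; [now left | exact Rxy].
      * destruct (HR x' Hx') as [y' [Hy' Rxy']]. exists y'. split; [now right | exact Rxy'].
Qed.

(* [bs] records, for each move of the player, whether the opponent then wins
   moving first; in misere play a player without a move wins. *)
Definition first_wins (bs : list bool) : bool :=
  match bs with [] => true | _ :: _ => existsb negb bs end.

Lemma lf_rf_unfold G :
  lf G = first_wins (map rf (leftOpts G)) /\ rf G = first_wins (map lf (rightOpts G)).
Proof.
  induction G as [L R IHL IHR] using game_ind_In. split.
  - destruct L as [|g L]; [reflexivity|].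
    cbn [lf leftOpts map first_wins]. rewrite <- map_cons.
    apply existsb_map_ext_in. intros [gl [|r gr]] Hin; [reflexivity|].
    now rewrite (proj2 (IHL _ Hin)), forallb_negb_existsb.
  - destruct R as [|g R]; [reflexivity|].
    cbn [rf rightOpts map first_wins]. rewrite <- map_cons.
    apply existsb_map_ext_in. intros [[|l gl] gr] Hin; [reflexivity|].
    now rewrite (proj1 (IHR _ Hin)), forallb_negb_existsb.
Qed.

Lemma first_wins_Permutation bs bs' : Permutation bs bs' -> first_wins bs = first_wins bs'.
Proof.
  intros Hp. destruct bs as [|b bs], bs' as [|b' bs'].
  - reflexivity.
  - now apply Permutation_nil in Hp.
  - now apply Permutation_sym, Permutation_nil in Hp.
  - exact (existsb_Permutation negb _ _ Hp).
Qed.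

Lemma first_wins_map_true {A} (f : A -> bool) l :
  first_wins (map f l) = true <-> l = [] \/ exists x, In x l /\ f x = false.
Proof.
  destruct l as [|y l]; [intuition|].
  change (first_wins (map f (y :: l))) with (existsb negb (map f (y :: l))).
  rewrite existsb_exists. split.
  - intros [b [Hb Hn]]. apply in_map_iff in Hb as [x [<- Hx]].
    right. exists x. now rewrite negb_true_iff in Hn.
  - intros [[=] | [x [Hx Hn]]]. exists (f x). split; [now apply in_map | now rewrite Hn].
Qed.

Lemma first_wins_map_false {A} (f : A -> bool) l :
  first_wins (map f l) = false <-> l <> [] /\ forall x, In x l -> f x = true.
Proof.
  rewrite <- not_true_iff_false, first_wins_map_true. split.
  - intros Hn. split; [tauto|]. intros x Hx.
    apply not_false_iff_true. intros Hf. eauto.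
  - intros [Hl Hall] [He | [x [Hx Hn]]]; [tauto|]. now rewrite Hall in Hn.
Qed.

Lemma lf_true_iff G :
  lf G = true <-> leftOpts G = [] \/ exists GL, In GL (leftOpts G) /\ rf GL = false.
Proof. rewrite (proj1 (lf_rf_unfold G)). apply first_wins_map_true. Qed.

Lemma lf_false_iff G :
  lf G = false <-> leftOpts G <> [] /\ forall GL, In GL (leftOpts G) -> rf GL = true.
Proof. rewrite (proj1 (lf_rf_unfold G)). apply first_wins_map_false. Qed.

Lemma rf_true_iff G :
  rf G = true <-> rightOpts G = [] \/ exists GR, In GR (rightOpts G) /\ lf GR = false.
Proof. rewrite (proj2 (lf_rf_unfold G)). apply first_wins_map_true. Qed.

Lemma rf_false_iff G :
  rf G = false <-> rightOpts G <> [] /\ forall GR, In GR (rightOpts G) -> lf GR = true.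
Proof. rewrite (proj2 (lf_rf_unfold G)). apply first_wins_map_false. Qed.

Lemma leftOpts_gadd G H :
  leftOpts (gadd G H) = map (fun x => gadd x H) (leftOpts G) ++ map (gadd G) (leftOpts H).
Proof. now destruct G, H. Qed.

Lemma rightOpts_gadd G H :
  rightOpts (gadd G H) = map (fun x => gadd x H) (rightOpts G) ++ map (gadd G) (rightOpts H).
Proof. now destruct G, H. Qed.

Lemma lf_gadd_no_leftOpts G H : leftOpts G = [] -> leftOpts H = [] -> lf (gadd G H) = true.
Proof. intros HG HH. apply lf_true_iff. left. now rewrite leftOpts_gadd, HG, HH. Qed.

Lemma game_eta G : G = Mk (leftOpts G) (rightOpts G).
Proof. now destruct G. Qed.

Lemma gadd_assoc a b c : gadd (gadd a b) c = gadd a (gadd b c).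
Proof.
  revert b c. induction a as [aL aR IHaL IHaR] using game_ind_In. intros b.
  induction b as [bL bR IHbL IHbR] using game_ind_In. intros c.
  induction c as [cL cR IHcL IHcR] using game_ind_In.
  rewrite (game_eta (gadd (gadd _ _) _)), (game_eta (gadd (Mk aL aR) (gadd _ _))).
  rewrite !leftOpts_gadd, !rightOpts_gadd. cbn [leftOpts rightOpts].
  rewrite !map_app, !map_map, !app_assoc.
  f_equal; (f_equal; [f_equal|]); apply map_ext_in; auto.
Qed.

Lemma lf_rf_gadd_shuffle3 a b c :
  lf (gadd a (gadd b c)) = lf (gadd b (gadd a c)) /\
  rf (gadd a (gadd b c)) = rf (gadd b (gadd a c)).
Proof.
  revert b c. induction a as [aL aR IHaL IHaR] using game_ind_In. intros b.
  induction b as [bL bR IHbL IHbR] using game_ind_In. intros c.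
  induction c as [cL cR IHcL IHcR] using game_ind_In.
  rewrite !(proj1 (lf_rf_unfold (gadd _ _))), !(proj2 (lf_rf_unfold (gadd _ _))).
  split; apply first_wins_Permutation;
    rewrite ?leftOpts_gadd, ?rightOpts_gadd, ?leftOpts_gadd, ?rightOpts_gadd;
    cbn [leftOpts rightOpts]; rewrite !map_app, !map_map.
  - rewrite (map_ext_in _ _ aL (fun x Hx => proj2 (IHaL x Hx _ _))),
            (map_ext_in _ _ bL (fun y Hy => proj2 (IHbL y Hy _))),
            (map_ext_in _ _ cL (fun z Hz => proj2 (IHcL z Hz))).
    apply Permutation_app_swap_app.
  - rewrite (map_ext_in _ _ aR (fun x Hx => proj1 (IHaR x Hx _ _))),
            (map_ext_in _ _ bR (fun y Hy => proj1 (IHbR y Hy _))),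
            (map_ext_in _ _ cR (fun z Hz => proj1 (IHcR z Hz))).
    apply Permutation_app_swap_app.
Qed.

Lemma o_gadd_shuffle3 a b c : o (gadd a (gadd b c)) = o (gadd b (gadd a c)).
Proof. unfold o. now destruct (lf_rf_gadd_shuffle3 a b c) as [-> ->]. Qed.

Lemma outcome_le_o_iff G H :
  outcome_le (o G) (o H) <-> (lf G = true -> lf H = true) /\ (rf H = true -> rf G = true).
Proof. unfold o. destruct (lf G), (rf G), (lf H), (rf H); simpl; intuition congruence. Qed.

Lemma outcome_le_trans x y z : outcome_le x y -> outcome_le y z -> outcome_le x z.
Proof. destruct x, y, z; simpl; tauto. Qed.

Definition ge_all (G H : game) : Prop := forall X, outcome_le (o (gadd H X)) (o (gadd G X)).

Lemma dge_iff_ge_all G H : dge G H <-> ge_all G H.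
Proof.
  split.
  - intros Hge X. apply (Hge (fun _ => True)); [repeat split | exact I].
  - intros Hge U _ X _. apply Hge.
Qed.

Lemma ge_all_gadd G1 G2 H1 H2 :
  ge_all G1 H1 -> ge_all G2 H2 -> ge_all (gadd G1 G2) (gadd H1 H2).
Proof.
  intros Hge1 Hge2 X. rewrite !gadd_assoc.
  apply outcome_le_trans with (o (gadd H1 (gadd G2 X))).
  - rewrite (o_gadd_shuffle3 H1 H2 X), (o_gadd_shuffle3 H1 G2 X). apply Hge2.
  - apply Hge1.
Qed.

Lemma left_dead_end_iff G :
  left_dead_end G <-> leftOpts G = [] /\ forall GR, In GR (rightOpts G) -> left_dead_end GR.
Proof.
  split.
  - now intros [R HR].
  - destruct G as [L R]; cbn. intros [-> HR]. now constructor.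
Qed.

Lemma left_dead_end_rightOpt G GR :
  left_dead_end G -> In GR (rightOpts G) -> left_dead_end GR.
Proof. intros HG. now apply left_dead_end_iff. Qed.

Lemma left_dead_end_gadd G H : left_dead_end G -> left_dead_end H -> left_dead_end (gadd G H).
Proof.
  revert H. induction G as [GL GR _ IHG] using game_ind_In. intros H.
  induction H as [HL HR _ IHH] using game_ind_In.
  rewrite !left_dead_end_iff, leftOpts_gadd, rightOpts_gadd. cbn [leftOpts rightOpts].
  intros [-> HG] [-> HH]. split; [reflexivity|].
  intros x Hx. apply in_app_or in Hx as [Hx | Hx]; apply in_map_iff in Hx as [y [<- Hy]].
  - apply IHG; auto. now apply left_dead_end_iff.
  - apply IHH; auto. now apply left_dead_end_iff.
Qed.

Lemma left_dead_end_simply_closed : simply_closed left_dead_end.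
Proof.
  split.
  - intros G H HG [HH | HH]; apply left_dead_end_iff in HG as [HL HR].
    + now rewrite HL in HH.
    + now apply HR.
  - exact left_dead_end_gadd.
Qed.

Lemma cl_simply_closed A : simply_closed (cl A).
Proof.
  split.
  - intros G H HG HH S HS HA. exact (proj1 HS G H (HG S HS HA) HH).
  - intros G H HG HH S HS HA. exact (proj2 HS G H (HG S HS HA) (HH S HS HA)).
Qed.

Lemma cl_left_dead_end A :
  (forall G, A G -> left_dead_end G) -> forall G, cl A G -> left_dead_end G.
Proof. intros HA G HG. exact (HG _ left_dead_end_simply_closed HA). Qed.

Fixpoint game_of_nat (n : nat) : game :=
  match n with 0 => Mk [] [] | S m => Mk [game_of_nat m] [] end.

(* Right walks down a chain of Right options of D while Left can only spend
   the integer, so with n the length of the chain Left runs out of moves first. *)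
Lemma rf_gadd_game_of_nat D : left_dead_end D -> exists n, rf (gadd D (game_of_nat n)) = true.
Proof.
  intros HD. induction HD as [[|DR R] HR IH].
  - exists 0. reflexivity.
  - destruct (IH DR (or_introl eq_refl)) as [n Hn]. exists (S n).
    apply rf_true_iff. right. exists (gadd DR (game_of_nat (S n))). split.
    + rewrite rightOpts_gadd. apply in_or_app. left. now left.
    + apply lf_false_iff.
      rewrite leftOpts_gadd, (proj1 (proj1 (left_dead_end_iff DR) (HR DR (or_introl eq_refl)))).
      split; [discriminate|]. now intros w [<- | []].
Qed.

Lemma not_ge_all_rf_witness G H :
  left_dead_end H -> ~ ge_all G H -> exists Y, rf (gadd G Y) = true /\ rf (gadd H Y) = false.
Proof.
  intros HH Hnge. apply not_all_ex_not in Hnge as [X HX]. rewrite outcome_le_o_iff in HX.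
  assert (Hcases : (lf (gadd H X) = true /\ lf (gadd G X) = false) \/
                   (rf (gadd G X) = true /\ rf (gadd H X) = false)).
  { destruct (lf (gadd H X)), (lf (gadd G X)), (rf (gadd G X)), (rf (gadd H X));
      intuition discriminate. }
  destruct Hcases as [[EH EG] | HY]; [| now exists X].
  (* In G + {|X} Right moves to G + X, where Left moving first loses. *)
  exists (Mk [] [X]). split.
  - apply rf_true_iff. right. exists (gadd G X). split; [|exact EG].
    rewrite rightOpts_gadd. apply in_or_app. right. now left.
  - apply rf_false_iff. rewrite rightOpts_gadd. split.
    + intros Hnil. now apply app_eq_nil in Hnil as [_ Hnil].
    + intros w Hw. apply in_app_or in Hw as [Hw | [<- | []]]; [|exact EH].
      apply in_map_iff in Hw as [h [<- Hh]].
      apply lf_gadd_no_leftOpts; [|reflexivity].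
      apply left_dead_end_iff. exact (left_dead_end_rightOpt H h HH Hh).
Qed.

Definition test_game (n : nat) (ys : list game) : game :=
  Mk (game_of_nat n :: ys) [Mk [] []].

Lemma rf_gadd_test_game_true G G' n ys :
  In G' (rightOpts G) -> leftOpts G' = [] ->
  rf (gadd G' (game_of_nat n)) = true -> (forall y, In y ys -> rf (gadd G' y) = true) ->
  rf (gadd G (test_game n ys)) = true.
Proof.
  intros HG' HL' Hn Hys. apply rf_true_iff. right.
  exists (gadd G' (test_game n ys)). split.
  - rewrite rightOpts_gadd. apply in_or_app. left. now apply (in_map (fun x => gadd x _)).
  - apply lf_false_iff. rewrite leftOpts_gadd, HL'. split; [discriminate|].
    intros w [<- | Hw]; [exact Hn|].
    apply in_map_iff in Hw as [y [<- Hy]]. now apply Hys.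
Qed.

Lemma rf_gadd_test_game_false H n ys :
  leftOpts H = [] ->
  (forall h, In h (rightOpts H) -> exists y, In y ys /\ rf (gadd h y) = false) ->
  rf (gadd H (test_game n ys)) = false.
Proof.
  intros HL Hys. apply rf_false_iff. rewrite rightOpts_gadd. split.
  - intros Hnil. now apply app_eq_nil in Hnil as [_ Hnil].
  - intros w Hw. apply in_app_or in Hw as [Hw | [<- | []]].
    + apply in_map_iff in Hw as [h [<- Hh]]. destruct (Hys h Hh) as [y [Hy Ey]].
      apply lf_true_iff. right. exists (gadd h y). split; [|exact Ey].
      rewrite leftOpts_gadd. apply in_or_app. right. apply in_map. now right.
    + now apply lf_gadd_no_leftOpts.
Qed.

Lemma ge_all_rightOpt G H G' :
  left_dead_end G -> left_dead_end H -> ge_all G H -> In G' (rightOpts G) ->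
  exists H', In H' (rightOpts H) /\ ge_all G' H'.
Proof.
  intros HG HH Hge HG'. apply NNPP. intros Hnone.
  pose proof (left_dead_end_rightOpt G G' HG HG') as HG'dead.
  assert (Hwit : forall h, In h (rightOpts H) ->
            exists Y, rf (gadd G' Y) = true /\ rf (gadd h Y) = false).
  { intros h Hh. apply not_ge_all_rf_witness; [exact (left_dead_end_rightOpt H h HH Hh)|].
    intros Hge'. apply Hnone. now exists h. }
  destruct (list_choice _ _ _ Hwit) as [ys [HGys HHys]].
  destruct (rf_gadd_game_of_nat G' HG'dead) as [n Hn].
  destruct (proj1 (outcome_le_o_iff _ _) (Hge (test_game n ys))) as [_ Hrf].
  assert (HT : rf (gadd G (test_game n ys)) = true).
  { apply (rf_gadd_test_game_true G G'); auto. now apply left_dead_end_iff. }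
  assert (HnT : rf (gadd H (test_game n ys)) = false).
  { apply rf_gadd_test_game_false; [now apply left_dead_end_iff | exact HHys]. }
  now rewrite (Hrf HT) in HnT.
Qed.

Theorem mainTheorem15 (A : gset) :
  (forall G, A G -> left_dead_end G) -> simply_closed (up A).
Proof.
  intros HA. destruct (cl_simply_closed A) as [Hcl_option Hcl_gadd]. split.
  - intros G G' [HG [H [HclH Hge]]] [HG' | HG'].
    + now rewrite (proj1 (proj1 (left_dead_end_iff G) HG)) in HG'.
    + apply dge_iff_ge_all in Hge.
      destruct (ge_all_rightOpt G H G' HG (cl_left_dead_end A HA H HclH) Hge HG')
        as [H' [HH' Hge']].
      split; [exact (left_dead_end_rightOpt G G' HG HG')|].
      exists H'. split.
      * apply (Hcl_option H); [exact HclH | now right].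
      * now apply dge_iff_ge_all.
  - intros G1 G2 [HG1 [H1 [Hcl1 Hge1]]] [HG2 [H2 [Hcl2 Hge2]]].
    split; [now apply left_dead_end_gadd|].
    exists (gadd H1 H2). split; [now apply Hcl_gadd|].
    apply dge_iff_ge_all, ge_all_gadd; now apply dge_iff_ge_all.
Qed.
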